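(* Let $w\in W$ and $\alpha\in\Phi^+\cap w\Phi^-$. Then $\ell(\sigma_\alpha w)=\ell(w)-1$ if and only if there do not exist $\beta,\delta\in\Phi^+\cap w\Phi^-$ with $\alpha=\beta+\delta$. Similarly, for $\alpha\in\Phi^+\cap w\Phi^+$, $\ell(\sigma_\alpha w)=\ell(w)+1$ if and only if there do not exist $\beta,\delta\in\Phi^+\cap w\Phi^+$ with $\alpha=\beta+\delta$.
   Context: $\Phi$ is a simply laced (reduced, irreducible ADE) root system with positive roots $\Phi^+$, $\Phi^-=-\Phi^+$, Weyl group $W$, length function $\ell$, and $\sigma_\alpha$ the reflection in $\alpha$. *)

From HB Require Import structures.
From mathcomp Require Import all_boot all_order all_algebra.
Set Implicit Arguments. Unset Strict Implicit. Unset Printing Implicit Defensive.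
Import Order.TTheory GRing.Theory Num.Theory.
Local Open Scope ring_scope.

Section RootSystems.
Variables (R : realFieldType) (n : nat).
Implicit Types (a b : 'cV[R]_n) (Phi Delta : seq 'cV[R]_n) (w : 'M[R]_n).

Definition dot a b : R := (a^T *m b) 0 0.

(* matrix of the reflection sigma_a : v |-> v - 2 (v,a)/(a,a) a *)
Definition refl a : 'M[R]_n := 1%:M - (2 / dot a a) *: (a *m a^T).

Definition root_system Phi : Prop :=
  [/\ [/\ uniq Phi, 0 \notin Phi & (span Phi = fullv)%VS],
      (forall a b, a \in Phi -> b \in Phi -> refl a *m b \in Phi),
      (forall a b, a \in Phi -> b \in Phi ->
          exists z : int, 2 * dot b a / dot a a = z%:~R) &
      (forall a (c : R), a \in Phi -> c *: a \in Phi -> c = 1 \/ c = -1)].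

Definition irreducible_rs Phi : Prop :=
  forall P : pred 'cV[R]_n,
    (forall a b, a \in Phi -> b \in Phi -> P a -> ~~ P b -> dot a b = 0) ->
    all P Phi \/ all (predC P) Phi.

Definition simply_laced Phi : Prop :=
  forall a b, a \in Phi -> b \in Phi -> dot a a = dot b b.

Definition ADE_root_system Phi : Prop :=
  [/\ root_system Phi, irreducible_rs Phi & simply_laced Phi].

Definition nonneg_comb Delta a : Prop :=
  exists c : 'I_(size Delta) -> nat, a = \sum_(i < size Delta) (c i)%:R *: Delta`_i.

Definition is_base Phi Delta : Prop :=
  [/\ free Delta, all (mem Phi) Delta &
      forall a, a \in Phi -> nonneg_comb Delta a \/ nonneg_comb Delta (- a)].

Definition pos_root Phi Delta a : Prop := a \in Phi /\ nonneg_comb Delta a.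
Definition neg_root Phi Delta a : Prop := a \in Phi /\ nonneg_comb Delta (- a).

Inductive in_Weyl Phi : 'M[R]_n -> Prop :=
  | Weyl1 : in_Weyl Phi 1%:M
  | WeylS a w : a \in Phi -> in_Weyl Phi w -> in_Weyl Phi (refl a *m w).

Definition word_prod Delta (s : seq 'I_(size Delta)) : 'M[R]_n :=
  foldr (fun (i : 'I_(size Delta)) (M : 'M[R]_n) => refl Delta`_i *m M) 1%:M s.

Definition has_word_of_size Delta w (k : nat) : bool :=
  [exists t : k.-tuple 'I_(size Delta), word_prod (tval t) == w].

Definition is_length Delta w (k : nat) : bool :=
  has_word_of_size Delta w k && [forall j : 'I_k, ~~ has_word_of_size Delta w j].

Definition inv_neg Phi Delta w b : Prop :=
  pos_root Phi Delta b /\ exists g, neg_root Phi Delta g /\ b = w *m g.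
Definition inv_pos Phi Delta w b : Prop :=
  pos_root Phi Delta b /\ exists g, pos_root Phi Delta g /\ b = w *m g.

End RootSystems.

(* The length of w is the number N(w) of positive roots in w Phi^-: the
   exchange property shows that a reduced word has exactly N(w) letters, once
   every element of the Weyl group is written as a word in simple reflections.
   For a positive root a, comparing N(s_a w) with N(w) only involves the
   positive roots x sent to negative roots by s_a.  Besides a itself, in the
   simply laced case these satisfy s_a x = x - a, so x |-> a - x pairs them off
   into the decompositions a = b + d into positive roots.  Both Phi^+ /\ w Phi^-
   and Phi^+ /\ w Phi^+ are closed under sums that are roots, so no pair lies in
   the class not containing a, and N changes by exactly one iff no pair lies in
   the class containing a. *)

From HB Require Import structures.
From mathcomp Require Import all_boot all_order all_algebra.
From mathcomp Require Import boolp.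
From mathcomp Require Import ring lra zify.
Set Implicit Arguments. Unset Strict Implicit. Unset Printing Implicit Defensive.
Import Order.TTheory GRing.Theory Num.Theory.
Local Open Scope ring_scope.

Section Reflections.
Variables (R : realFieldType) (n : nat).
Implicit Types (a b c : 'cV[R]_n) (p q : 'M[R]_n).

Lemma dotE a b : dot a b = \sum_i a i 0 * b i 0.
Proof. by rewrite /dot !mxE; apply: eq_bigr => i _; rewrite !mxE. Qed.

Lemma dotC a b : dot a b = dot b a.
Proof. by rewrite !dotE; apply: eq_bigr => i _; rewrite mulrC. Qed.

Lemma dot0r a : dot a 0 = 0.
Proof. by rewrite /dot mulmx0 mxE. Qed.

Lemma dotDr a b c : dot a (b + c) = dot a b + dot a c.
Proof. by rewrite /dot mulmxDr mxE. Qed.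

Lemma dotZr a b k : dot a (k *: b) = k * dot a b.
Proof. by rewrite /dot -scalemxAr mxE. Qed.

Lemma dotNr a b : dot a (- b) = - dot a b.
Proof. by rewrite -scaleN1r dotZr mulN1r. Qed.

Lemma dotBr a b c : dot a (b - c) = dot a b - dot a c.
Proof. by rewrite dotDr dotNr. Qed.

Lemma dotDl a b c : dot (b + c) a = dot b a + dot c a.
Proof. by rewrite dotC dotDr !(dotC a). Qed.

Lemma dotZl a b k : dot (k *: b) a = k * dot b a.
Proof. by rewrite dotC dotZr dotC. Qed.

Lemma dotNl a b : dot (- b) a = - dot b a.
Proof. by rewrite dotC dotNr dotC. Qed.

Lemma dotBl a b c : dot (b - c) a = dot b a - dot c a.
Proof. by rewrite dotDl dotNl. Qed.

Lemma dot_ge0 a : 0 <= dot a a.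
Proof. by rewrite dotE sumr_ge0 // => i _; rewrite -expr2 sqr_ge0. Qed.

Lemma dot_eq0 a : (dot a a == 0) = (a == 0).
Proof.
apply/idP/eqP => [|->]; last by rewrite dotE big1 // => i _; rewrite mxE mul0r.
rewrite dotE psumr_eq0 => [/allP Ha|i _]; last by rewrite -expr2 sqr_ge0.
apply/matrixP => i j; rewrite ord1 mxE.
by move: (Ha i (mem_index_enum i)); rewrite /= mulf_eq0 orbb => /eqP.
Qed.

Lemma dot_gt0 a : a != 0 -> 0 < dot a a.
Proof. by move=> Ha; rewrite lt_def dot_eq0 Ha dot_ge0. Qed.

Lemma mulmx_cVP p q : (forall b : 'cV[R]_n, p *m b = q *m b) -> p = q.
Proof.
move=> Hpq; apply/matrixP => i j.
by have /matrixP /(_ i 0) := Hpq (delta_mx j 0); rewrite -!colE !mxE.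
Qed.

Lemma reflE a b : refl a *m b = b - (2 * dot a b / dot a a) *: a.
Proof.
rewrite /refl mulmxBl mul1mx -scalemxAl -mulmxA.
rewrite [a^T *m b]mx11_scalar mul_mx_scalar scalerA.
by congr (_ - _ *: _); rewrite /dot mulrAC.
Qed.

Lemma refl_self a : a != 0 -> refl a *m a = - a.
Proof.
move=> Ha; rewrite reflE mulfK ?dot_eq0 // scaler_nat.
by rewrite mulr2n opprD addrA subrr add0r.
Qed.

Lemma reflK a b : a != 0 -> refl a *m (refl a *m b) = b.
Proof.
move=> Ha; rewrite !(reflE a) dotBr dotZr.
have aa0 : dot a a != 0 by rewrite dot_eq0.
set d := dot a a; set e := dot a b.
have -> : 2 * (e - 2 * e / d * d) / d = - (2 * e / d) by field.
by rewrite scaleNr opprK subrK.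
Qed.

Lemma reflmxK a : a != 0 -> refl a *m refl a = 1%:M.
Proof. by move=> Ha; apply: mulmx_cVP => b; rewrite -mulmxA reflK // mul1mx. Qed.

Lemma reflN a : refl (- a) = refl a.
Proof.
apply: mulmx_cVP => b; rewrite !reflE !dotNl !dotNr opprK.
by rewrite mulrN mulNr scaleNr scalerN opprK.
Qed.

Lemma dot_refl a b c : a != 0 -> dot (refl a *m b) (refl a *m c) = dot b c.
Proof.
move=> Ha; rewrite !reflE dotBl !dotBr !dotZl !dotZr ?(dotC c a) ?(dotC b a).
have aa0 : dot a a != 0 by rewrite dot_eq0.
by field.
Qed.

Lemma refl_conj p a : (forall b c, dot (p *m b) (p *m c) = dot b c) ->
  refl (p *m a) *m p = p *m refl a.
Proof.
move=> Hp; apply: mulmx_cVP => b.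
by rewrite -!mulmxA !reflE !Hp mulmxBr scalemxAr.
Qed.

Lemma refl_reflmx a b : a != 0 -> refl (refl a *m b) = refl a *m refl b *m refl a.
Proof.
move=> Ha; rewrite -[LHS]mulmx1 -(reflmxK Ha) mulmxA refl_conj // => x y.
exact: dot_refl.
Qed.

End Reflections.

Section PairingCount.
Variables (T : finType) (g : T -> T) (Q S : {set T}).
Hypotheses (gK : involutive g) (gQ : forall x, x \in Q -> g x \in Q).
Hypothesis gS : forall x, x \in Q -> (x \in S) || (g x \in S).

Let pairing_sub : g @: (Q :\: S) \subset Q :&: S.
Proof.
apply/subsetP => _ /imsetP [x /setDP [xQ xS] ->].
by rewrite inE gQ //=; move: (gS xQ); rewrite (negbTE xS).
Qed.

Lemma card_pairing_le : (#|Q :\: S| <= #|Q :&: S|)%N.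
Proof. by rewrite -(card_imset _ (can_inj gK)); apply: subset_leq_card. Qed.

Lemma card_pairing_eq :
  #|Q :&: S| = #|Q :\: S| <-> ~ exists2 x, x \in Q :&: S & g x \in S.
Proof.
rewrite -(card_imset (Q :\: S) (can_inj gK)); split.
  move=> Hcard [x xQS gxS].
  have /eqP Hg : g @: (Q :\: S) == Q :&: S by rewrite eqEcard pairing_sub Hcard /=.
  move: xQS; rewrite -Hg => /imsetP [y /setDP [_ yS] xy].
  by move: gxS; rewrite xy gK (negbTE yS).
move=> Hno; suff -> : g @: (Q :\: S) = Q :&: S by [].
apply/eqP; rewrite eqEsubset pairing_sub /=.
apply/subsetP => x /setIP [xQ xS]; rewrite -[x]gK imset_f // inE gQ // andbT.
by apply/negP => gxS; apply: Hno; exists x; rewrite ?inE ?xQ.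
Qed.

End PairingCount.

Section RootSystemWithBase.
Variables (R : realFieldType) (n : nat) (Phi Delta : seq 'cV[R]_n).
Hypotheses (HPhi : root_system Phi) (HDelta : is_base Phi Delta).

Local Notation s := (size Delta).
Local Notation pos := (pos_root Phi Delta).
Local Notation neg := (neg_root Phi Delta).
Local Notation word := (@word_prod R n Delta).
Implicit Types (i j : 'I_s) (t : seq 'I_s) (a b d g : 'cV[R]_n) (w : 'M[R]_n).

Definition lincomb (x : 'I_s -> R) : 'cV[R]_n := \sum_(i < s) x i *: Delta`_i.

Lemma eq_lincomb (x y : 'I_s -> R) : x =1 y -> lincomb x = lincomb y.
Proof. by move=> Hxy; apply: eq_bigr => i _; rewrite Hxy. Qed.

Lemma lincombD (x y : 'I_s -> R) : lincomb x + lincomb y = lincomb (fun i => x i + y i).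
Proof. by rewrite /lincomb -big_split; apply: eq_bigr => i _; rewrite scalerDl. Qed.

Lemma lincombB (x y : 'I_s -> R) : lincomb x - lincomb y = lincomb (fun i => x i - y i).
Proof. by rewrite /lincomb -sumrB; apply: eq_bigr => i _; rewrite scalerBl. Qed.

Lemma lincombZ k (x : 'I_s -> R) : k *: lincomb x = lincomb (fun i => k * x i).
Proof. by rewrite /lincomb scaler_sumr; apply: eq_bigr => i _; rewrite scalerA. Qed.

Lemma lincomb0 : lincomb (fun _ => 0) = 0.
Proof. by rewrite /lincomb big1 // => i _; rewrite scale0r. Qed.

Lemma lincomb_delta j : Delta`_j = lincomb (fun i => (i == j)%:R).
Proof.
rewrite /lincomb (bigD1 j) //= eqxx scale1r big1 ?addr0 // => i /negbTE ->.
by rewrite scale0r.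
Qed.

Lemma lincomb_inj (x y : 'I_s -> R) : lincomb x = lincomb y -> x =1 y.
Proof.
move=> Hxy i; apply/eqP; rewrite -subr_eq0; apply/eqP; move: i.
case: HDelta => /(@freeP _ _ _ (in_tuple Delta)) Hfree _ _; apply: Hfree.
by change (lincomb (fun i => x i - y i) = 0); rewrite -lincombB Hxy subrr.
Qed.

Lemma dot_lincomb a (x : 'I_s -> R) : dot a (lincomb x) = \sum_i x i * dot a Delta`_i.
Proof.
rewrite /lincomb (big_morph (dot a) (dotDr a) (dot0r a)).
by apply: eq_bigr => i _; rewrite dotZr.
Qed.

Lemma root_neq0 a : a \in Phi -> a != 0.
Proof. by case: HPhi => -[_ Phi0 _] _ _ _ Ha; apply: contraNneq Phi0 => <-. Qed.

Lemma root_refl a b : a \in Phi -> b \in Phi -> refl a *m b \in Phi.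
Proof. by case: HPhi => _ Hrefl _ _; apply: Hrefl. Qed.

Lemma rootN a : a \in Phi -> - a \in Phi.
Proof. by move=> Ha; rewrite -refl_self ?root_neq0 // root_refl. Qed.

Lemma root_cartan a b : a \in Phi -> b \in Phi ->
  exists z : int, 2 * dot b a / dot a a = z%:~R.
Proof. by case: HPhi => _ _ Hint _; apply: Hint. Qed.

Lemma root_reduced a k : a \in Phi -> k *: a \in Phi -> k = 1 \/ k = -1.
Proof. by case: HPhi => _ _ _ Hred; apply: Hred. Qed.

Lemma pos_or_neg a : a \in Phi -> pos a \/ neg a.
Proof. by case: HDelta => _ _ Hbase Ha; case: (Hbase a Ha) => ?; [left | right]. Qed.

Lemma nonneg_combD a b :
  nonneg_comb Delta a -> nonneg_comb Delta b -> nonneg_comb Delta (a + b).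
Proof.
move=> [c ->] [d ->]; exists (fun i => (c i + d i)%N).
by rewrite [_ + _]lincombD; apply: eq_lincomb => i; rewrite natrD.
Qed.

Lemma nonneg_comb_eq0 a :
  nonneg_comb Delta a -> nonneg_comb Delta (- a) -> a = 0.
Proof.
move=> [c Ec] [d Ed].
change (a = lincomb (fun i => (c i)%:R)) in Ec.
change (- a = lincomb (fun i => (d i)%:R)) in Ed.
have Hcd : lincomb (fun i => (c i + d i)%:R) = lincomb (fun _ => 0).
  rewrite lincomb0 -[RHS](subrr a) {1}Ec Ed lincombD.
  by apply: eq_lincomb => i; rewrite natrD.
rewrite Ec -lincomb0; apply: eq_lincomb => i.
by have /eqP := lincomb_inj Hcd i; rewrite pnatr_eq0 addn_eq0 => /andP [/eqP -> _].
Qed.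

Lemma pos_neg_exclusive a : pos a -> neg a -> False.
Proof.
move=> [Ha Hca] [_ Hcna]; move: (root_neq0 Ha).
by rewrite (nonneg_comb_eq0 Hca Hcna) eqxx.
Qed.

Lemma neg_posN a : neg a <-> pos (- a).
Proof.
split=> [[Ha Hc] | [Ha Hc]]; split=> //; first exact: rootN.
by rewrite -[a]opprK rootN.
Qed.

Lemma pos_negN a : pos a <-> neg (- a).
Proof. by rewrite neg_posN opprK. Qed.

Lemma neg_notpos a : a \in Phi -> neg a <-> ~ pos a.
Proof.
move=> Ha; split=> [Hna Hpa | Hnpa]; first exact: pos_neg_exclusive Hpa Hna.
by case: (pos_or_neg Ha).
Qed.

Lemma simple_root j : Delta`_j \in Phi.
Proof. by case: HDelta => _ /allP Hsub _; apply: Hsub; rewrite mem_nth. Qed.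

Lemma simple_neq0 j : Delta`_j != 0.
Proof. exact: root_neq0 (simple_root j). Qed.

Lemma pos_simple j : pos Delta`_j.
Proof.
split; first exact: simple_root.
by exists (fun i => nat_of_bool (i == j)); rewrite [LHS]lincomb_delta.
Qed.

(* A positive root whose reflection is negative has support in a single
   simple root, hence is that simple root since Phi is reduced. *)
Lemma pos_refl_simple j b : pos b -> b != Delta`_j -> pos (refl Delta`_j *m b).
Proof.
move=> [Hb [c Ec]] Hbj.
have Hrb : refl Delta`_j *m b \in Phi by rewrite root_refl ?simple_root.
case: (pos_or_neg Hrb) => // -[_ [d Ed]]; exfalso.
set m := 2 * dot Delta`_j b / dot Delta`_j Delta`_j.
have E : lincomb (fun i => (c i)%:R - m * (i == j)%:R + (d i)%:R) = lincomb (fun _ => 0).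
  rewrite lincomb0 -lincombD -lincombB -lincombZ -lincomb_delta.
  by rewrite -[lincomb (fun i => (c i)%:R)]Ec -[lincomb (fun i => (d i)%:R)]Ed -reflE subrr.
have c0 k : k != j -> c k = 0%N.
  move=> Hkj; have := lincomb_inj E k.
  rewrite (negbTE Hkj) mulr0 subr0 -natrD => /eqP; rewrite pnatr_eq0 addn_eq0.
  by case/andP => /eqP.
have Eb : b = (c j)%:R *: Delta`_j.
  by rewrite Ec /lincomb (bigD1 j) //= big1 ?addr0 // => i /c0 ->; rewrite scale0r.
have HcD : (c j)%:R *: Delta`_j \in Phi by rewrite -Eb.
have [cj1 | cjN1] := root_reduced (simple_root j) HcD.
  by move: Hbj; rewrite Eb cj1 scale1r eqxx.
by move: (ler0n R (c j)); rewrite cjN1; lra.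
Qed.

Lemma word_cat t1 t2 : word (t1 ++ t2) = word t1 *m word t2.
Proof. by elim: t1 => [|i t1 IH] /=; rewrite ?mul1mx // IH mulmxA. Qed.

Lemma root_word t b : b \in Phi -> word t *m b \in Phi.
Proof.
elim: t => [|i t IH] /=; first by rewrite mul1mx.
by move=> Hb; rewrite -mulmxA root_refl ?simple_root ?IH.
Qed.

Lemma word_revK t : word (rev t) *m word t = 1%:M.
Proof.
elim: t => [|i t IH] //=; first by rewrite mul1mx.
rewrite rev_cons -cats1 word_cat /= mulmx1 mulmxA -[_ *m refl _]mulmxA.
by rewrite reflmxK ?simple_neq0 // mulmx1.
Qed.

Lemma word_inj t : injective (mulmx (word t) : 'cV[R]_n -> 'cV[R]_n).
Proof. by move=> x y /(congr1 (mulmx (word (rev t)))); rewrite !mulmxA word_revK !mul1mx. Qed.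

Definition in_wneg w b := exists g, neg g /\ b = w *m g.
Definition in_wpos w b := exists g, pos g /\ b = w *m g.

Lemma in_wnegN w b : in_wneg w (- b) <-> in_wpos w b.
Proof.
split=> [[g [Hg Eg]] | [g [Hg Eg]]]; exists (- g); rewrite mulmxN -Eg ?opprK.
  by split; first by rewrite -neg_posN.
by split; first by rewrite -pos_negN.
Qed.

Lemma in_wneg_refl a w b : a != 0 ->
  in_wneg (refl a *m w) b <-> in_wneg w (refl a *m b).
Proof.
move=> Ha; split=> [[g [Hg ->]] | [g [Hg Eg]]]; exists g; split=> //.
  by rewrite !mulmxA reflmxK // mul1mx.
by rewrite -mulmxA -Eg reflK.
Qed.

Lemma in_wneg1 b : in_wneg 1%:M b <-> neg b.
Proof. by split=> [[g [Hg ->]] | Hb]; [rewrite mul1mx | exists b; rewrite mul1mx]. Qed.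

Section Word.
Variable t : seq 'I_s.

Lemma in_wneg_or_wpos b : b \in Phi -> in_wneg (word t) b \/ in_wpos (word t) b.
Proof.
move=> Hb; have Hg : word (rev t) *m b \in Phi by apply: root_word.
have Eb : b = word t *m (word (rev t) *m b).
  by rewrite mulmxA -{1}[t]revK word_revK mul1mx.
by case: (pos_or_neg Hg) => Hpn; [right | left]; exists (word (rev t) *m b).
Qed.

Lemma in_wneg_notwpos b : b \in Phi -> in_wneg (word t) b <-> ~ in_wpos (word t) b.
Proof.
move=> Hb; split=> [[g [Hg ->]] [h [Hh /word_inj Egh]] | Hnp].
  by apply: (pos_neg_exclusive Hh); rewrite -Egh.
by case: (in_wneg_or_wpos Hb).
Qed.

Lemma in_wpos_notwneg b : b \in Phi -> in_wpos (word t) b <-> ~ in_wneg (word t) b.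
Proof.
move=> Hb; split=> [Hp /(in_wneg_notwpos Hb) //| Hn].
by case: (in_wneg_or_wpos Hb).
Qed.

Lemma in_wpos_add b d : in_wpos (word t) b -> in_wpos (word t) d -> b + d \in Phi ->
  in_wpos (word t) (b + d).
Proof.
move=> [g [[Hg Cg] ->]] [h [[Hh Ch] ->]] Hbd; exists (g + h).
split; last by rewrite mulmxDr.
split; last exact: nonneg_combD.
have -> : g + h = word (rev t) *m (word t *m g + word t *m h).
  by rewrite -mulmxDr mulmxA word_revK mul1mx.
exact: root_word.
Qed.

Lemma in_wneg_add b d : in_wneg (word t) b -> in_wneg (word t) d -> b + d \in Phi ->
  in_wneg (word t) (b + d).
Proof.
rewrite -(opprK b) -(opprK d) -opprD !in_wnegN => Hb Hd /rootN.
by rewrite opprK; apply: in_wpos_add.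
Qed.

End Word.

Local Notation T := (seq_sub Phi).

Definition rootset (P : 'cV[R]_n -> Prop) : {set T} := [set x | `[< P (val x) >]].
Definition invset w := rootset pos :&: rootset (in_wneg w).
Definition ninv w := #|invset w|.

Lemma asbool_posN b : b \in Phi -> `[< pos (- b) >] = ~~ `[< pos b >].
Proof. by move=> Hb; rewrite -asbool_neg; apply: asbool_equiv_eq; rewrite -neg_posN neg_notpos. Qed.

Lemma asbool_wnegN t b : b \in Phi ->
  `[< in_wneg (word t) (- b) >] = ~~ `[< in_wneg (word t) b >].
Proof.
by move=> Hb; rewrite -asbool_neg; apply: asbool_equiv_eq; rewrite in_wnegN in_wpos_notwneg.
Qed.

Lemma asbool_wneg_refl a w b : a != 0 ->
  `[< in_wneg (refl a *m w) b >] = `[< in_wneg w (refl a *m b) >].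
Proof. by move=> Ha; apply: asbool_equiv_eq; apply: in_wneg_refl. Qed.

Lemma asbool_wneg_reflE a b : a != 0 -> refl a *m b \in Phi ->
  `[< in_wneg (refl a) b >] = ~~ `[< pos (refl a *m b) >].
Proof.
move=> Ha Hb; rewrite -{1}[refl a]mulmx1 asbool_wneg_refl // -asbool_neg.
by apply: asbool_equiv_eq; rewrite in_wneg1 neg_notpos.
Qed.

Definition negT (x : T) : T := SeqSub (rootN (ssvalP x)).

Lemma negTK : involutive negT.
Proof. by move=> x; apply: val_inj; rewrite /= opprK. Qed.

Section Reflection.
Variables (a : 'cV[R]_n) (Ha : a \in Phi).

Definition reflT (x : T) : T := SeqSub (root_refl Ha (ssvalP x)).

Lemma reflTK : involutive reflT.
Proof. by move=> x; apply: val_inj; rewrite /= reflK ?root_neq0. Qed.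

(* Pulling back by [reflT] turns [invset (refl a *m word t)] into the roots of
   [W] that [refl a] makes positive; [negT] matches those among them that are
   negative with [invset (refl a) :\: W]. *)
Lemma ninv_refl t :
  (ninv (refl a *m word t) + #|invset (refl a) :&: rootset (in_wneg (word t))| =
   ninv (word t) + #|invset (refl a) :\: rootset (in_wneg (word t))|)%N.
Proof.
set W := rootset _; have a0 := root_neq0 Ha.
have reflT_root (x : T) : refl a *m val x \in Phi := root_refl Ha (ssvalP x).
pose A := reflT @^-1: rootset pos :&: W; pose B := invset (word t).
have EA : invset (refl a *m word t) = reflT @^-1: A.
  by apply/setP => x; rewrite !inE /= reflK // asbool_wneg_refl.
have EBA : invset (refl a) :&: W = B :\: A.
  apply/setP => x; rewrite !inE /= (asbool_wneg_reflE a0 (reflT_root x)).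
  by case: `[< pos _ >]; case: `[< pos _ >]; case: `[< in_wneg _ _ >].
have EAB : invset (refl a) :\: W = negT @^-1: (A :\: B).
  apply/setP => y; rewrite !inE /= mulmxN (asbool_posN (ssvalP y)).
  rewrite (asbool_posN (reflT_root y)) (asbool_wnegN _ (ssvalP y)).
  rewrite (asbool_wneg_reflE a0 (reflT_root y)).
  by case: `[< pos _ >]; case: `[< pos _ >]; case: `[< in_wneg _ _ >].
rewrite /ninv EA EBA EAB (card_preimset _ (can_inj reflTK)).
rewrite (card_preimset _ (can_inj negTK)).
by rewrite -(cardsID B A) -(cardsID A B) setIC addnAC.
Qed.

Definition rootT : T := SeqSub Ha.

Definition summands := invset (refl a) :\ rootT.

Lemma card_invset_refl (W : {set T}) : pos a ->
  #|invset (refl a) :&: W| = ((rootT \in W) + #|summands :&: W|)%N.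
Proof.
move=> Hpa; have a0 := root_neq0 Ha.
rewrite (cardsD1 rootT) /summands setIDAC !inE /= asbool_wneg_reflE ?root_refl //.
by rewrite refl_self // (asbool_posN Ha) negbK (asboolT Hpa).
Qed.

End Reflection.

Lemma summands_simple j : summands (simple_root j) = set0.
Proof.
apply/setP => x.
rewrite !inE /= asbool_wneg_reflE ?simple_neq0 ?root_refl ?simple_root ?ssvalP //.
case: eqP => [//| Hxj]; apply/negbTE; rewrite negb_and.
case: (boolP `[< pos _ >]) => //= /asboolP Hpx; rewrite negbK; apply/asboolP.
by apply: pos_refl_simple Hpx _; apply/eqP => Exj; apply: Hxj; apply: val_inj.
Qed.

Lemma ninv_simple j t :
  (ninv (word (j :: t)) + `[< in_wneg (word t) Delta`_j >] =
   ninv (word t) + ~~ `[< in_wneg (word t) Delta`_j >])%N.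
Proof.
have := ninv_refl (simple_root j) t.
rewrite setDE !(card_invset_refl (simple_root j) _ (pos_simple j)) summands_simple.
by rewrite !set0I cards0 !addn0 !inE.
Qed.

Lemma ninv1 : ninv 1%:M = 0%N.
Proof.
apply/eqP; rewrite cards_eq0; apply/eqP/setP => x; rewrite !inE.
by apply/negbTE; rewrite -asbool_and; apply/asboolPn => -[Hp /in_wneg1 /(pos_neg_exclusive Hp)].
Qed.

Lemma exchange t g : pos g -> in_wneg (word t) g ->
  exists2 t', (size t' < size t)%N & word t' = refl g *m word t.
Proof.
elim: t g => [|j t IH] g Hg /=.
  by move/in_wneg1 => /(pos_neg_exclusive Hg).
move/(in_wneg_refl _ _ (simple_neq0 j)) => Hinv.
have [-> | Hgj] := eqVneq g Delta`_j.
  by exists t; rewrite // mulmxA reflmxK ?simple_neq0 ?mul1mx.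
have [t' Ht' Et'] := IH _ (pos_refl_simple Hg Hgj) Hinv.
exists (j :: t'); first by [].
rewrite /= Et' refl_reflmx ?simple_neq0 // -!mulmxA.
by rewrite [refl _ *m (refl _ *m _)]mulmxA reflmxK ?simple_neq0 ?mul1mx.
Qed.

Lemma ninv_reduced t : (forall t', word t' = word t -> (size t <= size t')%N) ->
  ninv (word t) = size t.
Proof.
elim: t => [|j t IH] Hmin; first exact: ninv1.
have Hmin' t' : word t' = word t -> (size t <= size t')%N.
  by move=> Et'; have := Hmin (j :: t'); rewrite /= Et'; apply.
have Hnotinv : ~~ `[< in_wneg (word t) Delta`_j >].
  apply/asboolPn => /(exchange (pos_simple j)) [t' Ht' Et'].
  by have := Hmin t' Et'; rewrite /=; lia.
by have := ninv_simple j t; rewrite (negbTE Hnotinv) IH //=; lia.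
Qed.

Lemma has_wordP w k :
  reflect (exists2 t, size t = k & word t = w) (has_word_of_size Delta w k).
Proof.
apply: (iffP existsP) => [[tp /eqP Etp] | [t Ht Etw]].
  by exists (tval tp); rewrite ?size_tuple.
have Ht' : size t == k by rewrite Ht.
by exists (Tuple Ht'); rewrite /= Etw.
Qed.

Lemma is_length_ninv t k : is_length Delta (word t) k <-> k = ninv (word t).
Proof.
have ninv_min t0 : (forall t', word t' = word t0 -> (size t0 <= size t')%N) ->
  word t0 = word t -> ninv (word t) = size t0.
  by move=> Hmin <-; rewrite ninv_reduced.
split.
  case/andP => /has_wordP [t0 Ht0 Et0] /forallP Hshort; rewrite -Ht0 (ninv_min t0) // => t' Et'.
  rewrite Ht0 leqNgt; apply/negP => Hlt; move: (Hshort (Ordinal Hlt)) => /negP; apply.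
  by apply/has_wordP; exists t'; rewrite // Et'.
have exP : exists m, has_word_of_size Delta (word t) m.
  by exists (size t); apply/has_wordP; exists t.
case: (ex_minnP exP) => m /has_wordP [t0 Ht0 Et0] Hmin ->.
rewrite (ninv_min t0) // ?Ht0 => [|t' Et']; last first.
  by apply: Hmin; apply/has_wordP; exists t'; rewrite // Et' Et0.
apply/andP; split; first by apply/has_wordP; exists t0.
by apply/forallP => i; apply/negP => /Hmin; rewrite leqNgt ltn_ord.
Qed.

Lemma pos_dot_simple_gt0 g : pos g -> exists j, 0 < dot g Delta`_j.
Proof.
move=> [Hg [c Ec]]; apply/existsP; apply: contraTT (dot_gt0 (root_neq0 Hg)).
rewrite negb_exists => /forallP Hle; rewrite -leNgt {2}Ec dot_lincomb.
by apply: sumr_le0 => i _; rewrite mulr_ge0_le0 // leNgt Hle.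
Qed.

(* The Cartan integer of [g] against [Delta`_j] is a positive integer, so
   reflecting lowers the height. *)
Lemma height_refl_simple g (c : 'I_s -> nat) j : pos g ->
  g = lincomb (fun i => (c i)%:R) -> 0 < dot g Delta`_j -> g != Delta`_j ->
  exists2 d : 'I_s -> nat, refl Delta`_j *m g = lincomb (fun i => (d i)%:R) &
    (\sum_i d i < \sum_i c i)%N.
Proof.
move=> Hpg Ec Hdot Hgj; have [_ [d Ed]] := pos_refl_simple Hpg Hgj.
exists d => //; have [z Hz] := root_cartan (simple_root j) (proj1 Hpg).
have Ed' : lincomb (fun i => (d i)%:R) = lincomb (fun i => (c i)%:R - z%:~R * (i == j)%:R).
  by rewrite -[LHS]Ed reflE dotC Hz -lincombB -lincombZ -lincomb_delta -Ec.
have Hsum : \sum_i (d i)%:R = \sum_i (c i)%:R - z%:~R :> R.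
  rewrite (eq_bigr _ (fun i _ => lincomb_inj Ed' i)) sumrB; congr (_ - _).
  by rewrite (bigD1 j) //= eqxx mulr1 big1 ?addr0 // => i /negbTE ->; rewrite mulr0.
have z_gt0 : (0 : R) < z%:~R by rewrite -Hz !mulr_gt0 ?invr_gt0 ?dot_gt0 ?simple_neq0.
have z_ge1 : (1 : R) <= z%:~R by rewrite ler1z; move: z_gt0; rewrite ltr0z; lia.
by rewrite -(ltr_nat R) !natr_sum Hsum; lra.
Qed.

Lemma refl_pos_word g : pos g -> exists t, refl g = word t.
Proof.
case=> Hg [c Ec]; have [h Hh] : exists h, (\sum_i c i < h)%N by exists (\sum_i c i).+1.
elim: h g c Hg Ec Hh => [|h IH] g c Hg Ec Hh //.
have [j Hdot] := pos_dot_simple_gt0 (conj Hg (ex_intro _ c Ec)).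
have [-> | Hgj] := eqVneq g Delta`_j; first by exists [:: j]; rewrite /= mulmx1.
have [d Ed Hdc] := height_refl_simple (conj Hg (ex_intro _ c Ec)) Ec Hdot Hgj.
have [t Et] := IH _ d (root_refl (simple_root j) Hg) Ed (leq_trans Hdc Hh).
exists (j :: t ++ [:: j]); rewrite /= word_cat -Et refl_reflmx ?simple_neq0 //= mulmx1.
by rewrite !mulmxA reflmxK ?simple_neq0 // mul1mx -mulmxA reflmxK ?simple_neq0 // mulmx1.
Qed.

Lemma refl_word a : a \in Phi -> exists t, refl a = word t.
Proof.
move=> Ha; case: (pos_or_neg Ha) => [|/neg_posN]; first exact: refl_pos_word.
by rewrite -reflN; apply: refl_pos_word.
Qed.

Lemma Weyl_word w : in_Weyl Phi w -> exists t, w = word t.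
Proof.
elim=> [|a w' Ha _ [t ->]]; first by exists [::].
by have [t' ->] := refl_word Ha; exists (t' ++ t); rewrite word_cat.
Qed.

Lemma rootset_wpos t : rootset (in_wpos (word t)) = ~: rootset (in_wneg (word t)).
Proof.
apply/setP => x; rewrite !inE -asbool_neg; apply: asbool_equiv_eq.
exact: in_wpos_notwneg (ssvalP x).
Qed.

Section SimplyLaced.
Hypothesis Hsl : simply_laced Phi.

(* Equal lengths force [(b - a, b - a) > 0] and [(b + a, b + a) > 0] to bound
   the Cartan integer strictly between -2 and 2. *)
Lemma cartan_simply_laced a b : a \in Phi -> b \in Phi -> b != a -> b != - a ->
  exists z : int, [/\ (-1 <= z <= 1)%R, 2 * dot b a / dot a a = z%:~R
                    & refl a *m b = b - z%:~R *: a].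
Proof.
move=> Ha Hb Hba HbNa; have [z Hz] := root_cartan Ha Hb.
exists z; split=> //; last by rewrite reflE dotC Hz.
have Hsub : 0 < dot (b - a) (b - a) by apply: dot_gt0; rewrite subr_eq0.
have Hadd : 0 < dot (b + a) (b + a) by apply: dot_gt0; rewrite addr_eq0.
rewrite !dotBl !dotBr !dotDl !dotDr (dotC a b) -(Hsl Ha Hb) in Hsub Hadd.
have Hz' : z%:~R * dot a a = 2 * dot b a by rewrite -Hz mulfVK ?dot_eq0 ?root_neq0.
have aa_gt0 := dot_gt0 (root_neq0 Ha).
have z_lt2 : (z%:~R : R) < 2 by nra.
have z_gtN2 : (-2 : R) < z%:~R by nra.
have : (z < 2)%R by rewrite -(ltr_int R).
have : (-2 < z)%R by rewrite -(ltr_int R).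
lia.
Qed.

Section Summands.
Variables (a : 'cV[R]_n) (Hpa : pos a).
Let Ha := proj1 Hpa.
Local Notation Q := (summands Ha).

Definition pairT (x : T) : T := negT (reflT Ha x).

Lemma pairTK : involutive pairT.
Proof. by move=> x; apply: val_inj; rewrite /= mulmxN reflK ?root_neq0 // !opprK. Qed.

Lemma summandsP x :
  reflect [/\ val x != a, pos (val x) & neg (refl a *m val x)] (x \in Q).
Proof.
have Hr := root_refl Ha (ssvalP x).
rewrite !inE -val_eqE /= asbool_wneg_reflE ?root_neq0 //.
apply: (iffP and3P) => -[xa Hp Hn]; split=> //; first exact/asboolP.
- by apply/(neg_notpos Hr)/asboolPn.
- exact/asboolP.
- by apply/asboolPn/(neg_notpos Hr).
Qed.

Lemma summands_refl x : x \in Q -> refl a *m val x = val x - a.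
Proof.
move=> /summandsP [xa Hpx Hnx].
have xNa : val x != - a.
  by apply/eqP => Ex; apply: (pos_neg_exclusive Hpa); rewrite neg_posN -Ex.
have [z [Hz _ Erefl]] := cartan_simply_laced Ha (ssvalP x) xa xNa.
move: Hnx; rewrite Erefl; have : z = 0 \/ z = 1 \/ z = -1 by lia.
case=> [-> | [-> | ->]] Hn.
- by rewrite scale0r subr0 in Hn; case: (pos_neg_exclusive Hpx Hn).
- by rewrite scale1r.
- exfalso; apply: (pos_neg_exclusive _ Hn); split; first by case: Hn.
  rewrite (_ : (-1)%:~R = -1 :> R) // scaleN1r opprK.
  exact: nonneg_combD (proj2 Hpx) (proj2 Hpa).
Qed.

Lemma summands_add x : x \in Q -> val x + val (pairT x) = a.
Proof. by move=> Hx; rewrite /= summands_refl // opprB addrC subrK. Qed.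

Lemma pairT_summands x : x \in Q -> pairT x \in Q.
Proof.
move=> Hx; have [_ Hpx Hnx] := summandsP _ Hx.
apply/summandsP; split=> /=.
- apply/eqP => Eg; move: (root_neq0 (ssvalP x)).
  by have := summands_add Hx; rewrite /= Eg -{2}[a]add0r => /addIr ->; rewrite eqxx.
- by rewrite -neg_posN.
- by rewrite mulmxN reflK ?root_neq0 // -pos_negN.
Qed.

Lemma decomposition_summands (C : 'cV[R]_n -> Prop) :
  (exists b d, [/\ pos b /\ C b, pos d /\ C d & a = b + d]) <->
  exists2 x, x \in Q :&: rootset C & pairT x \in rootset C.
Proof.
split=> [[b [d [[Hpb Cb] [Hpd Cd] Ea]]] | [x /setIP [Hx]]]; last first.
  rewrite !inE => /asboolP Cx /asboolP Cg.
  have [_ Hpx Hnx] := summandsP _ Hx.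
  exists (val x), (val (pairT x)); split; [by [] | | by rewrite summands_add].
  by split=> //=; rewrite -neg_posN.
have notNa v : pos v -> v != - a.
  by move=> Hv; apply/eqP => Ev; apply: (pos_neg_exclusive Hpa); rewrite neg_posN -Ev.
have summand_neq u v : v \in Phi -> a = u + v -> u != a.
  move=> Hv Euv; apply: contraNneq (root_neq0 Hv) => Eu.
  by apply/eqP; apply: (addrI u); rewrite -Euv Eu addr0.
have [zb [zb_range Pb Rb]] := cartan_simply_laced Ha (proj1 Hpb)
  (summand_neq _ _ (proj1 Hpd) Ea) (notNa _ Hpb).
have [zd [zd_range Pd _]] := cartan_simply_laced Ha (proj1 Hpd)
  (summand_neq _ _ (proj1 Hpb) (etrans Ea (addrC b d))) (notNa _ Hpd).
have /eqP : (zb + zd)%:~R = 2%:~R :> R.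
  by rewrite intrD -Pb -Pd -mulrDl -mulrDr -dotDl -Ea mulfK ?dot_eq0 ?root_neq0.
rewrite eqr_int => /eqP zsum; have zb1 : zb = 1 by lia.
have Rb' : refl a *m b = - d by rewrite Rb zb1 scale1r Ea opprD addNKr.
exists (SeqSub (proj1 Hpb)); last by rewrite inE /= Rb' opprK; apply/asboolP.
rewrite inE; apply/andP; split; last by rewrite inE; apply/asboolP.
apply/summandsP; split=> //=; first exact: summand_neq (proj1 Hpd) Ea.
by rewrite Rb' -pos_negN.
Qed.

Section ClosedComplement.
Variable C : 'cV[R]_n -> Prop.
Hypothesis Ca : C a.
Hypothesis notC_add : forall b d, b \in Phi -> d \in Phi -> b + d \in Phi ->
  ~ C b -> ~ C d -> ~ C (b + d).

Let summands_pairT_in x : x \in Q -> (x \in rootset C) || (pairT x \in rootset C).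
Proof.
move=> Hx; apply/negPn/negP; rewrite !inE => /norP [/asboolPn nCx /asboolPn nCg].
have := notC_add (ssvalP x) (ssvalP (pairT x)); rewrite summands_add //.
by move=> /(_ Ha nCx nCg).
Qed.

Lemma card_summands_le : (#|Q :\: rootset C| <= #|Q :&: rootset C|)%N.
Proof. exact: card_pairing_le pairTK pairT_summands summands_pairT_in. Qed.

Lemma card_summands_eq : #|Q :&: rootset C| = #|Q :\: rootset C| <->
  ~ exists b d, [/\ pos b /\ C b, pos d /\ C d & a = b + d].
Proof.
by rewrite (card_pairing_eq pairTK pairT_summands summands_pairT_in) decomposition_summands.
Qed.

End ClosedComplement.
End Summands.

Lemma length_refl_wneg t a : pos a -> in_wneg (word t) a ->
  is_length Delta (refl a *m word t) (ninv (word t)).-1 <->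
  ~ exists b d, [/\ inv_neg Phi Delta (word t) b, inv_neg Phi Delta (word t) d & a = b + d].
Proof.
move=> Hpa Hinv; have [t' Et'] := refl_word (proj1 Hpa).
rewrite Et' -word_cat is_length_ninv word_cat -Et'.
have notwneg_add b d : b \in Phi -> d \in Phi -> b + d \in Phi ->
    ~ in_wneg (word t) b -> ~ in_wneg (word t) d -> ~ in_wneg (word t) (b + d).
  by move=> Hb Hd Hbd; rewrite -!in_wpos_notwneg // => Hpb Hpd; apply: in_wpos_add.
apply: iff_trans (card_summands_eq Hpa Hinv notwneg_add).
have := card_summands_le Hpa Hinv notwneg_add.
have := ninv_refl (proj1 Hpa) t.
rewrite !setDE !(card_invset_refl (proj1 Hpa) _ Hpa) !inE /= (asboolT Hinv) /=.
lia.
Qed.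

Lemma length_refl_wpos t a : pos a -> in_wpos (word t) a ->
  is_length Delta (refl a *m word t) (ninv (word t)).+1 <->
  ~ exists b d, [/\ inv_pos Phi Delta (word t) b, inv_pos Phi Delta (word t) d & a = b + d].
Proof.
move=> Hpa Hinv; have [t' Et'] := refl_word (proj1 Hpa).
rewrite Et' -word_cat is_length_ninv word_cat -Et'.
have notwpos_add b d : b \in Phi -> d \in Phi -> b + d \in Phi ->
    ~ in_wpos (word t) b -> ~ in_wpos (word t) d -> ~ in_wpos (word t) (b + d).
  by move=> Hb Hd Hbd; rewrite -!in_wneg_notwpos // => Hnb Hnd; apply: in_wneg_add.
apply: iff_trans (card_summands_eq Hpa Hinv notwpos_add).
have := card_summands_le Hpa Hinv notwpos_add.
have := ninv_refl (proj1 Hpa) t.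
rewrite rootset_wpos !setDE setCK !(card_invset_refl (proj1 Hpa) _ Hpa) !inE /=.
rewrite (asbool_equiv_eq (in_wneg_notwpos t (proj1 Hpa))) asbool_neg (asboolT Hinv) /=.
lia.
Qed.

End SimplyLaced.

End RootSystemWithBase.

Theorem mainTheorem14 (R : realFieldType) (n : nat)
    (Phi Delta : seq 'cV[R]_n)
    (HPhi : ADE_root_system Phi) (HDelta : is_base Phi Delta)
    (w : 'M[R]_n) (Hw : in_Weyl Phi w) :
  (forall alpha : 'cV[R]_n, inv_neg Phi Delta w alpha ->
     exists k : nat, is_length Delta w k /\
       (is_length Delta (refl alpha *m w) k.-1 <->
        ~ exists beta delta : 'cV[R]_n,
            [/\ inv_neg Phi Delta w beta, inv_neg Phi Delta w delta &
                alpha = beta + delta])) /\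
  (forall alpha : 'cV[R]_n, inv_pos Phi Delta w alpha ->
     exists k : nat, is_length Delta w k /\
       (is_length Delta (refl alpha *m w) k.+1 <->
        ~ exists beta delta : 'cV[R]_n,
            [/\ inv_pos Phi Delta w beta, inv_pos Phi Delta w delta &
                alpha = beta + delta])).
Proof.
case: HPhi => Hrs _ Hsl; have [t ->] := Weyl_word Hrs HDelta Hw.
split=> alpha [Hpos Hinv]; exists (ninv Phi Delta (word_prod t));
  (split; first exact/(is_length_ninv Hrs HDelta)).
- exact: length_refl_wneg Hrs HDelta Hsl t alpha Hpos Hinv.
- exact: length_refl_wpos Hrs HDelta Hsl t alpha Hpos Hinv.
Qed.
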